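(* Let $A\in\mathbb{R}^{m\times n}$ with $\delta_{2k}<1$, let $x\in\mathbb{R}^n$, $\eta\in\mathbb{R}^m$, $y=Ax+\eta$, $S=\mathcal{L}_k(x)$ and $\eta'=Ax_{\overline S}+\eta$. Let $u\in\mathbb{R}^n$ be arbitrary, let $$w\in\arg\min_{w'}\{\|y-A(u\otimes w')\|_2^2:\ \mathbf e^Tw'=k,\ 0\le w'\le\mathbf e\},$$ and let $S'=\operatorname{supp}(\mathcal{H}_k(u\otimes w))$. Let $\hat w\in\{0,1\}^n$ be a $k$-sparse binary vector with $S\subseteq\operatorname{supp}(\hat w)$. Then (i) $$\|(x_S-u\otimes w)_{S\cup S'}\|_2\le\sqrt{\frac{1+\delta_k}{1-\delta_{2k}}}\|(x_S-u)\otimes\hat w\|_2+\frac{2}{\sqrt{1-\delta_{2k}}}\|\eta'\|_2+\frac{1}{\sqrt{1-\delta_{2k}}}\left\|A\left[(x_S-u\otimes w)_{\overline{S\cup S'}}\right]\right\|_2;$$ (ii) $$\left\|A\left[(x_S-u\otimes w)_{\overline{S\cup S'}}\right]\right\|_2\le2\sqrt{1+\delta_k}\,\|\mathcal{H}_k(u-x_S)\|_2 .$$ (In the paper, $u=u^p$ and $w=w^p$ are the iterates of the NTROT algorithm and $S'=\operatorname{supp}(x^{p+1})$.)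
   Context: Notation: $\|\cdot\|_2$ is the Euclidean norm; a vector is $k$-sparse if it has at most $k$ nonzero entries. For $\Omega\subseteq\{1,\dots,n\}$, $\overline\Omega$ is its complement and $x_\Omega$ is the vector obtained from $x$ by keeping the entries indexed by $\Omega$ and setting the others to zero. $\mathcal{L}_k(u)$ denotes the index set of the $k$ largest magnitudes of $u$ (ties broken arbitrarily), and $\mathcal{H}_k(u)=u_{\mathcal{L}_k(u)}$ is the hard thresholding operator (keeps the $k$ largest magnitudes, zeroes the rest). $u\otimes w$ is the entrywise (Hadamard) product; $\mathbf e=(1,\dots,1)^T$; inequalities between vectors are entrywise. The $q$-th order restricted isometry constant $\delta_q$ of $A$ is the smallest $\delta\ge0$ such that $(1-\delta)\|z\|_2^2\le\|Az\|_2^2\le(1+\delta)\|z\|_2^2$ for all $q$-sparse $z\in\mathbb{R}^n$. *)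

From mathcomp Require Import all_boot all_order all_algebra reals.
Set Implicit Arguments. Unset Strict Implicit. Unset Printing Implicit Defensive.
Import Order.TTheory GRing.Theory Num.Theory.
Local Open Scope ring_scope.

Section Defs.
Variable R : realType.

Definition sqnorm n (z : 'cV[R]_n) : R := \sum_(i < n) (z i 0) ^+ 2.
Definition norm2 n (z : 'cV[R]_n) : R := Num.sqrt (sqnorm z).

Definition supp n (z : 'cV[R]_n) : {set 'I_n} := [set i | z i 0 != 0].

Definition sparse n (k : nat) (z : 'cV[R]_n) : Prop := (#|supp z| <= k)%N.

Definition restr n (z : 'cV[R]_n) (O : {set 'I_n}) : 'cV[R]_n :=
  \col_i (if i \in O then z i 0 else 0).

Definition hadam n (u w : 'cV[R]_n) : 'cV[R]_n := \col_i (u i 0 * w i 0).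

(* T is a valid choice of L_k(u): an index set of the k largest magnitudes of u
   (ties broken arbitrarily; if k > n it is all indices). *)
Definition is_Lk n (k : nat) (u : 'cV[R]_n) (T : {set 'I_n}) : Prop :=
  #|T| = minn k n /\ forall i j, i \in T -> j \notin T -> `|u j 0| <= `|u i 0|.

Definition Hk n (u : 'cV[R]_n) (T : {set 'I_n}) : 'cV[R]_n := restr u T.

Definition RIP m n (A : 'M[R]_(m, n)) (q : nat) (d : R) : Prop :=
  0 <= d /\ forall z : 'cV[R]_n, sparse q z ->
    (1 - d) * sqnorm z <= sqnorm (A *m z) <= (1 + d) * sqnorm z.

Definition is_RIC m n (A : 'M[R]_(m, n)) (q : nat) (d : R) : Prop :=
  RIP A q d /\ forall d', RIP A q d' -> d <= d'.

Definition feasible n (k : nat) (w : 'cV[R]_n) : Prop :=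
  \sum_(i < n) w i 0 = k%:R /\ forall i, 0 <= w i 0 <= 1.

Definition is_argmin m n (A : 'M[R]_(m, n)) (y : 'cV[R]_m) (u : 'cV[R]_n)
  (k : nat) (w : 'cV[R]_n) : Prop :=
  feasible k w /\ forall w', feasible k w' ->
    sqnorm (y - A *m hadam u w) <= sqnorm (y - A *m hadam u w').

End Defs.

From mathcomp Require Import all_boot all_order all_algebra reals.
From mathcomp Require Import ring lra zify.
Import Order.TTheory GRing.Theory Num.Theory.
Local Open Scope ring_scope.
Set Implicit Arguments. Unset Strict Implicit.

(* Write e = x_S - u (x) w, O = S u S', and eta' = A x_{~S} + eta, so that
   y - A v = A (x_S - v) + eta' for every v.
   (i)  e_O is 2k-sparse, so by the lower RIP bound sqrt(1 - d2k) ||e_O|| is at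
        most ||A e_O|| <= ||y - A(u (x) w)|| + ||A e_{~O}|| + ||eta'||.  The
        indicator vector what of S is feasible, hence by minimality of w the
        residual is at most ||y - A(u (x) what)|| = ||A ((x_S - u) (x) what) + eta'||,
        and the upper RIP bound on this k-sparse vector finishes (i).
   (ii) e_{~O} = -(u (x) w)_D with D = ~O disjoint from S.  Writing
        ||A e_{~O}||^2 as a linear function of w and maximising it over the box
        0 <= w <= 1 with budget sum_D w <= k, the maximum is attained at the
        indicator of a set B of at most k indices (a fractional knapsack with
        unit weights).  Cauchy-Schwarz then gives ||A e_{~O}|| <= ||A u_B||,
        and u_B = (u - x_S)_B is dominated by H_k(u - x_S); this even yields
        (ii) with the constant 1 instead of 2.
   The file develops Euclidean geometry of column vectors, restrictions,
   the top-k and knapsack lemmas, the two RIP bounds, then (i), (ii), lemma5. *)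

Section Euclidean.
Variable R : realType.

Definition dot n (a b : 'cV[R]_n) : R := \sum_(i < n) a i 0 * b i 0.

Lemma sqnorm_ge0 n (z : 'cV[R]_n) : 0 <= sqnorm z.
Proof. by apply: sumr_ge0 => i _; rewrite sqr_ge0. Qed.

Lemma norm2_ge0 n (z : 'cV[R]_n) : 0 <= norm2 z.
Proof. exact: sqrtr_ge0. Qed.

Lemma norm2_sqr n (z : 'cV[R]_n) : norm2 z ^+ 2 = sqnorm z.
Proof. by rewrite sqr_sqrtr // sqnorm_ge0. Qed.

Lemma dot_sqnorm n (z : 'cV[R]_n) : dot z z = sqnorm z.
Proof. by apply: eq_bigr => i _; rewrite expr2. Qed.

Lemma sqnormD n (a b : 'cV[R]_n) :
  sqnorm (a + b) = sqnorm a + 2 * dot a b + sqnorm b.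
Proof.
rewrite /sqnorm /dot mulr_sumr -!big_split /=; apply: eq_bigr => i _.
by rewrite !mxE; ring.
Qed.

Lemma norm2N n (a : 'cV[R]_n) : norm2 (- a) = norm2 a.
Proof. by congr Num.sqrt; apply: eq_bigr => i _; rewrite !mxE sqrrN. Qed.

(* Cauchy-Schwarz, squared form: the quadratic sum of (a_i ||b||^2 - <a,b> b_i)^2
   equals ||b||^2 (||a||^2 ||b||^2 - <a,b>^2). *)
Lemma cauchy_schwarz_sqr n (a b : 'cV[R]_n) :
  dot a b ^+ 2 <= sqnorm a * sqnorm b.
Proof.
set A := sqnorm a; set B := sqnorm b; set C := dot a b.
have expand : \sum_(i < n) (a i 0 * B - C * b i 0) ^+ 2 = B * (A * B - C ^+ 2).
  have sq i : (a i 0 * B - C * b i 0) ^+ 2 =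
      a i 0 ^+ 2 * B ^+ 2 - a i 0 * b i 0 * (2 * B * C) + b i 0 ^+ 2 * C ^+ 2.
    by ring.
  under eq_bigr => i _ do rewrite sq.
  rewrite big_split sumrB /= -!mulr_suml -[\sum_(i < n) a i 0 ^+ 2]/A.
  by rewrite -[\sum_(i < n) b i 0 ^+ 2]/B -[\sum_(i < n) a i 0 * b i 0]/C; ring.
have nonneg : 0 <= B * (A * B - C ^+ 2).
  by rewrite -expand; apply: sumr_ge0 => i _; rewrite sqr_ge0.
have [B0 | Bneq0] := eqVneq B 0.
  have b0 i : b i 0 = 0.
    apply/eqP; rewrite -sqrf_eq0; move/eqP: B0.
    rewrite psumr_eq0 => [/allP/(_ i (mem_index_enum _))//|j _].
    exact: sqr_ge0.
  have -> : C = 0 by rewrite /C /dot big1 // => i _; rewrite b0 mulr0.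
  by rewrite B0 expr0n /= mulr0.
have Bpos : 0 < B by rewrite lt_def Bneq0 sqnorm_ge0.
by move: nonneg; rewrite pmulr_rge0 // subr_ge0 mulrC.
Qed.

Lemma cauchy_schwarz n (a b : 'cV[R]_n) : dot a b <= norm2 a * norm2 b.
Proof.
apply: le_trans (ler_norm _) _.
rewrite -sqrtr_sqr /norm2 -sqrtrM ?sqnorm_ge0 //.
by rewrite ler_sqrt ?cauchy_schwarz_sqr // mulr_ge0 ?sqnorm_ge0.
Qed.

Lemma norm2D n (a b : 'cV[R]_n) : norm2 (a + b) <= norm2 a + norm2 b.
Proof.
rewrite -(ger0_norm (addr_ge0 (norm2_ge0 a) (norm2_ge0 b))) -sqrtr_sqr.
rewrite /norm2 ler_sqrt ?sqr_ge0 // sqnormD.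
have := cauchy_schwarz a b; rewrite /norm2.
have := sqr_sqrtr (sqnorm_ge0 a); have := sqr_sqrtr (sqnorm_ge0 b).
move: (sqrtr_ge0 (sqnorm a)) (sqrtr_ge0 (sqnorm b)).
set p := Num.sqrt _; set q := Num.sqrt _; nra.
Qed.

Lemma norm2_sub3 n (a b c : 'cV[R]_n) :
  norm2 a <= norm2 (a + b + c) + norm2 b + norm2 c.
Proof.
have -> : a = a + b + c - c - b by rewrite !addrK.
apply: le_trans (norm2D _ _) _; rewrite norm2N !addrK.
have := norm2D (a + b + c) (- c); rewrite norm2N addrK; lra.
Qed.

Lemma norm2_le n p (a : 'cV[R]_n) (b : 'cV[R]_p) :
  sqnorm a <= sqnorm b -> norm2 a <= norm2 b.
Proof. by move=> h; rewrite /norm2 ler_sqrt ?sqnorm_ge0. Qed.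

Lemma norm2_le_scaled n p (a : 'cV[R]_n) (b : 'cV[R]_p) c :
  0 <= c -> sqnorm a <= c * sqnorm b -> norm2 a <= Num.sqrt c * norm2 b.
Proof. by move=> c0 h; rewrite /norm2 -sqrtrM // ler_sqrt // mulr_ge0 ?sqnorm_ge0. Qed.

Lemma norm2_ge_scaled n p (a : 'cV[R]_n) (b : 'cV[R]_p) c :
  c * sqnorm b <= sqnorm a -> Num.sqrt c * norm2 b <= norm2 a.
Proof.
move=> h; have [c0 | c_neg] := lerP 0 c.
  by rewrite /norm2 -sqrtrM // ler_sqrt ?sqnorm_ge0.
by rewrite ltr0_sqrtr // mul0r norm2_ge0.
Qed.

Lemma dot_mulmx m n (a : 'cV[R]_m) (M : 'M[R]_(m, n)) (q : 'cV[R]_n) :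
  dot a (M *m q) = dot (M^T *m a) q.
Proof.
rewrite /dot; under eq_bigr do rewrite mxE big_distrr.
rewrite exchange_big /=; apply: eq_bigr => j _; rewrite !mxE mulr_suml.
by apply: eq_bigr => r _; rewrite !mxE mulrA [A in A * _]mulrC.
Qed.

End Euclidean.

Section Restriction.
Variables (R : realType) (n : nat).
Implicit Types (x u v w z : 'cV[R]_n) (O : {set 'I_n}).

Lemma restr_split x O : restr x O + restr x (~: O) = x.
Proof.
apply/matrixP => i j; rewrite (ord1 j) !mxE inE.
by case: (i \in O); rewrite ?addr0 ?add0r.
Qed.

Lemma supp_restr x O : supp (restr x O) \subset O.
Proof. by apply/subsetP => i; rewrite inE mxE; case: (i \in O); rewrite ?eqxx. Qed.

Lemma supp_hadam u w : supp (hadam u w) \subset supp w.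
Proof. by apply/subsetP => i; rewrite !inE mxE; apply: contra => /eqP ->; rewrite mulr0. Qed.

Lemma sparse_sub q z (X : {set 'I_n}) :
  supp z \subset X -> (#|X| <= q)%N -> sparse q z.
Proof. by move=> zX Xq; rewrite /sparse (leq_trans (subset_leq_card zX)). Qed.

Lemma sqnorm_restr x O : sqnorm (restr x O) = \sum_(i in O) x i 0 ^+ 2.
Proof.
rewrite /sqnorm [RHS]big_mkcond /=; apply: eq_bigr => i _; rewrite mxE.
by case: (i \in O); rewrite ?expr0n.
Qed.

Lemma restr_subr_disjoint x u (S B : {set 'I_n}) :
  [disjoint B & S] -> restr (u - restr x S) B = restr u B.
Proof.
move=> BS; apply/matrixP => i j; rewrite (ord1 j) !mxE.
case iB: (i \in B) => //.
by rewrite (disjointFr BS iB) subr0.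
Qed.

Lemma sum_sqr_topk v (T B : {set 'I_n}) :
  (#|B| <= #|T|)%N ->
  (forall i j, i \in T -> j \notin T -> `|v j 0| <= `|v i 0|) ->
  \sum_(i in B) v i 0 ^+ 2 <= \sum_(i in T) v i 0 ^+ 2.
Proof.
move=> BT topT.
rewrite (big_setID T) (big_setID B (A := T)) /= setIC lerD2l.
set F := fun i : 'I_n => v i 0 ^+ 2.
have cardD : (#|B :\: T| <= #|T :\: B|)%N.
  by move: BT; rewrite -(cardsID T B) -(cardsID B T) setIC; lia.
have [TB0 | [j0 j0TB]] := set_0Vmem (T :\: B).
  move: cardD; rewrite TB0 cards0 leqn0 cards_eq0 => /eqP ->.
  by rewrite !big_set0.
case: (arg_minP F j0TB) => i0 /setDP [i0T i0B] i0min.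
have F_le i : i \in B :\: T -> F i <= F i0.
  case/setDP => _ iT; have := topT i0 i i0T iT.
  rewrite /F -(real_normK (num_real (v i 0))) -(real_normK (num_real (v i0 0))).
  by rewrite !expr2 => h; apply: ler_pM.
apply: (le_trans (ler_sum _ F_le)); rewrite sumr_const.
apply: (@le_trans _ _ (\sum_(i in T :\: B) F i0)); last exact: ler_sum.
by rewrite sumr_const ler_wpMn2l ?sqr_ge0.
Qed.

End Restriction.

Section BudgetedLinearMaximisation.
Variables (R : realType) (I : finType) (a : I -> R) (D : {set I}) (k : nat).

(* A subset B of D of size at most k with the largest a-sum: by exchange
   arguments its elements are nonnegative and beat every element of D outside
   it, and when B is not full nothing outside it is positive. *)
Lemma best_subset : exists2 B : {set I}, (B \subset D) && (#|B| <= k)%N &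
  [/\ forall i, i \in B -> 0 <= a i,
      forall i j, i \in B -> j \in D :\: B -> a j <= a i &
      (#|B| < k)%N -> forall j, j \in D :\: B -> a j <= 0].
Proof.
pose P := fun B : {set I} => (B \subset D) && (#|B| <= k)%N.
have P0 : P set0 by rewrite /P sub0set cards0.
have [B PB Bmax] := @arg_maxP _ _ _ set0 P (fun B => \sum_(i in B) a i) P0.
case/andP: (PB) => BD Bk; exists B => //; split.
- move=> i iB.
  have PBi : P (B :\ i).
    by rewrite /P (subset_trans (subsetDl _ _) BD) (leq_trans (subset_leq_card (subsetDl _ _))).
  by have := Bmax _ PBi; rewrite /= (big_setD1 _ iB) /=; lra.
- move=> i j iB /setDP [jD jB].
  have jBi : j \notin B :\ i by rewrite inE negb_and jB orbT.
  have PBij : P (j |: (B :\ i)).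
    rewrite /P subUset sub1set jD (subset_trans (subsetDl _ _) BD) /= cardsU1 jBi.
    by move: Bk; rewrite (cardsD1 i B) iB /=; lia.
  by have := Bmax _ PBij; rewrite /= (big_setU1 _ jBi) (big_setD1 _ iB) /=; lra.
- move=> Bltk j /setDP [jD jB].
  have PBj : P (j |: B) by rewrite /P subUset sub1set jD BD /= cardsU1 jB /=; lia.
  by have := Bmax _ PBj; rewrite /= (big_setU1 _ jB) /=; lra.
Qed.

Lemma threshold_subset : exists B : {set I}, exists2 tau : R,
  (B \subset D) && (#|B| <= k)%N &
  [/\ 0 <= tau, forall i, i \in B -> tau <= a i,
      forall j, j \in D :\: B -> a j <= tau & tau * (k%:R - #|B|%:R) = 0].
Proof.
have [B PB [Bpos Bbeats Bnotfull]] := best_subset.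
exists B; case/andP: (PB) => _ Bk.
have [Bltk | kleB] := ltnP #|B| k.
  by exists 0 => //; split => //; [exact: Bnotfull | exact: mul0r].
pose tau := \big[Order.max/0]_(j in D :\: B) a j.
exists tau => //; split.
- by move: (lexx tau) => /bigmax_leP [].
- by move=> i iB; apply: bigmax_le => [|j]; [exact: Bpos | exact: Bbeats].
- by move=> j jDB; apply: le_bigmax_cond.
- have -> : #|B| = k by apply/eqP; rewrite eqn_leq Bk kleB.
  by rewrite subrr mulr0.
Qed.

Lemma box_budget_max (w : I -> R) :
  (forall i, 0 <= w i <= 1) -> \sum_(i in D) w i <= k%:R ->
  exists2 B : {set I}, (B \subset D) && (#|B| <= k)%N &
    \sum_(i in D) a i * w i <= \sum_(i in B) a i.
Proof.
move=> w01 budget.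
have [B [tau PB [tau0 tau_le le_tau tau_full]]] := threshold_subset.
exists B => //; case/andP: PB => BD _.
rewrite (big_setID B) /= (setIidPr BD).
move: budget; rewrite (big_setID B) /= (setIidPr BD) => budget.
have outside : \sum_(j in D :\: B) a j * w j <= tau * \sum_(j in D :\: B) w j.
  rewrite mulr_sumr; apply: ler_sum => j jDB.
  by have := le_tau j jDB; have /andP[] := w01 j; nra.
have inside : \sum_(i in B) (a i * w i + tau * (1 - w i)) <= \sum_(i in B) a i.
  apply: ler_sum => i iB.
  by have := tau_le i iB; have /andP[] := w01 i; nra.
have slack : \sum_(i in B) tau * (1 - w i) = tau * (k%:R - \sum_(i in B) w i).
  have -> : tau * (k%:R - \sum_(i in B) w i)
           = tau * (k%:R - #|B|%:R) + tau * (#|B|%:R - \sum_(i in B) w i) by ring.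
  by rewrite tau_full add0r -mulr_sumr sumrB sumr_const.
have rest : \sum_(j in D :\: B) w j <= k%:R - \sum_(i in B) w i by lra.
move: inside; rewrite big_split /= slack.
have := ler_wpM2l tau0 rest; lra.
Qed.

End BudgetedLinearMaximisation.

Section RestrictedIsometry.
Variables (R : realType) (m n : nat) (A : 'M[R]_(m, n)).

Lemma RIP_lower q d z : RIP A q d -> sparse q z ->
  Num.sqrt (1 - d) * norm2 z <= norm2 (A *m z).
Proof. by case=> _ rip zq; apply: norm2_ge_scaled; case/andP: (rip _ zq). Qed.

Lemma RIP_upper q d z : RIP A q d -> sparse q z ->
  norm2 (A *m z) <= Num.sqrt (1 + d) * norm2 z.
Proof.
case=> d0 rip zq; apply: norm2_le_scaled; first lra.
by case/andP: (rip _ zq).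
Qed.

(* ||A (u (x) w)_D|| is dominated by ||A u_B|| for a set B of at most k indices
   of D, whenever 0 <= w <= 1 and sum_D w <= k: ||A z||^2 = <A^T A z, z> is
   linear in w, so the budgeted maximum is attained at an indicator vector, and
   Cauchy-Schwarz converts the resulting inner product into norms. *)
Lemma hadam_budget_bound (u w : 'cV[R]_n) (D : {set 'I_n}) (k : nat) :
  (forall i, 0 <= w i 0 <= 1) -> \sum_(i in D) w i 0 <= k%:R ->
  exists2 B : {set 'I_n}, (B \subset D) && (#|B| <= k)%N &
    norm2 (A *m restr (hadam u w) D) <= norm2 (A *m restr u B).
Proof.
move=> w01 budget; set z := restr (hadam u w) D.
pose g := A^T *m (A *m z).
have [B PB maxB] := @box_budget_max R _ (fun j => g j 0 * u j 0) D k (fun j => w j 0) w01 budget.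
exists B => //.
have energy : sqnorm (A *m z) = \sum_(j in D) g j 0 * u j 0 * w j 0.
  rewrite -dot_sqnorm dot_mulmx /dot [RHS]big_mkcond; apply: eq_bigr => j _.
  by rewrite /z !mxE; case: (j \in D); rewrite ?mulr0 ?mulrA.
have at_B : \sum_(j in B) g j 0 * u j 0 = dot (A *m z) (A *m restr u B).
  rewrite dot_mulmx /dot [LHS]big_mkcond; apply: eq_bigr => j _.
  by rewrite [restr _ _ j 0]mxE; case: (j \in B); rewrite ?mulr0.
have := cauchy_schwarz (A *m z) (A *m restr u B).
have : norm2 (A *m z) ^+ 2 <= norm2 (A *m z) * norm2 (A *m restr u B).
  by rewrite norm2_sqr energy; apply: le_trans maxB _; rewrite at_B cauchy_schwarz.
have := norm2_ge0 (A *m z); have := norm2_ge0 (A *m restr u B); nra.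
Qed.

End RestrictedIsometry.

Section Indicator.
Variables (R : realType) (n : nat).
Implicit Types (x u what : 'cV[R]_n) (S : {set 'I_n}).

Lemma binary_indicator what S :
  (forall i, what i 0 = 0 \/ what i 0 = 1) ->
  (#|supp what| <= #|S|)%N -> S \subset supp what ->
  forall i, what i 0 = (i \in S)%:R.
Proof.
move=> binary card_supp S_supp.
have -> : S = supp what by apply/eqP; rewrite eqEcard S_supp card_supp.
by move=> i; rewrite inE; case: (binary i) => ->; rewrite ?eqxx ?oner_eq0.
Qed.

Lemma indicator_feasible what S :
  (forall i, what i 0 = (i \in S)%:R) -> feasible #|S| what.
Proof.
move=> ind; split => [|i]; last by rewrite ind; case: (i \in S); rewrite ?lexx ?ler01.
rewrite (eq_bigr (fun i => if i \in S then 1 else 0)) => [|i _]; last by rewrite ind; case: (i \in S).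
by rewrite -big_mkcond sumr_const.
Qed.

Lemma indicator_hadam x u what S :
  (forall i, what i 0 = (i \in S)%:R) ->
  restr x S - hadam u what = hadam (restr x S - u) what.
Proof.
move=> ind; apply/matrixP => i j; rewrite (ord1 j) !mxE ind.
by case: (i \in S); rewrite ?mulr1 ?mulr0 ?subr0.
Qed.

Lemma feasible_card_le k (w : 'cV[R]_n) : feasible k w -> (k <= n)%N.
Proof.
case=> sum_w w01; rewrite -(ler_nat R) -sum_w -[n in n%:R]card_ord -sumr_const.
by apply: ler_sum => i _; case/andP: (w01 i).
Qed.

End Indicator.

Lemma divide_bound (R : realType) (s c a b p q : R) :
  0 < s -> s * a <= c * b + 2 * p + q ->
  a <= c / s * b + 2 / s * p + 1 / s * q.
Proof.
move=> s_gt0 bound; rewrite -(ler_pM2l s_gt0).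
have -> : s * (c / s * b + 2 / s * p + 1 / s * q) = c * b + 2 * p + q.
  by field; rewrite gt_eqF.
exact: bound.
Qed.

Section ErrorBounds.
Variables (R : realType) (m n k : nat) (A : 'M[R]_(m, n)).
Variables (x : 'cV[R]_n) (eta : 'cV[R]_m) (S : {set 'I_n}).

Lemma residual_split (v : 'cV[R]_n) :
  A *m x + eta - A *m v = A *m (restr x S - v) + (A *m restr x (~: S) + eta).
Proof.
rewrite -{1}(restr_split x S) mulmxDr mulmxBr.
by rewrite addrAC (addrAC (A *m restr x S)) -addrA.
Qed.

(* Part (i) before normalisation: e_O is 2k-sparse, and the residual of the
   minimiser w is at most the residual of any other feasible weight v. *)
Lemma on_support_bound dk d2k (u w v : 'cV[R]_n) (O : {set 'I_n}) :
  RIP A k dk -> RIP A (2 * k) d2k -> (#|O| <= 2 * k)%N ->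
  is_argmin A (A *m x + eta) u k w -> feasible k v ->
  sparse k (restr x S - hadam u v) ->
  Num.sqrt (1 - d2k) * norm2 (restr (restr x S - hadam u w) O)
    <= Num.sqrt (1 + dk) * norm2 (restr x S - hadam u v)
       + 2 * norm2 (A *m restr x (~: S) + eta)
       + norm2 (A *m restr (restr x S - hadam u w) (~: O)).
Proof.
move=> ripk rip2k cardO [_ w_min] v_feas v_sparse.
set eta' := A *m restr x (~: S) + eta; set e := restr x S - hadam u w.
have lower := RIP_lower rip2k (sparse_sub (supp_restr e O) cardO).
have upper := RIP_upper ripk v_sparse.
have residual : norm2 (A *m e + eta') <= norm2 (A *m (restr x S - hadam u v) + eta').
  by rewrite -!residual_split; apply: norm2_le; apply: w_min.
have split_e : A *m restr e O + A *m restr e (~: O) + eta' = A *m e + eta'.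
  by rewrite -mulmxDr restr_split.
have := norm2_sub3 (A *m restr e O) (A *m restr e (~: O)) eta'.
rewrite split_e.
have := norm2D (A *m (restr x S - hadam u v)) eta'.
lra.
Qed.

(* Part (ii), with constant 1: off S u S' the error is -(u (x) w), whose image
   under A is controlled by u on at most k indices outside S. *)
Lemma off_support_bound dk (u w : 'cV[R]_n) (O T2 : {set 'I_n}) :
  RIP A k dk -> is_Lk k (u - restr x S) T2 -> feasible k w -> S \subset O ->
  norm2 (A *m restr (restr x S - hadam u w) (~: O))
    <= Num.sqrt (1 + dk) * norm2 (Hk (u - restr x S) T2).
Proof.
move=> ripk [cardT2 topT2] [sum_w w01] SO.
have off_O : restr (restr x S - hadam u w) (~: O) = - restr (hadam u w) (~: O).
  apply/matrixP => i j; rewrite (ord1 j) !mxE inE.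
  case iO: (i \in O) => /=; first by rewrite oppr0.
  by rewrite (_ : i \in S = false) ?sub0r //; apply: contraFF iO; apply: (subsetP SO).
have budget : \sum_(i in ~: O) w i 0 <= k%:R.
  rewrite -sum_w big_mkcond; apply: ler_sum => i _.
  by case: ifP => _; [exact: lexx | case/andP: (w01 i)].
have [B /andP[BO cardB] AuB] := hadam_budget_bound A u w01 budget.
have BS : [disjoint B & S].
  rewrite disjoint_subset; apply/subsetP => i /(subsetP BO).
  by rewrite !inE; apply: contra; apply: (subsetP SO).
rewrite off_O mulmxN norm2N; apply: le_trans AuB _.
apply: le_trans (RIP_upper ripk (sparse_sub (supp_restr _ _) cardB)) _.
rewrite -(restr_subr_disjoint x u BS); apply: (ler_wpM2l (sqrtr_ge0 _)).
apply: norm2_le; rewrite /Hk !sqnorm_restr; apply: sum_sqr_topk topT2.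
by rewrite cardT2 leq_min cardB (leq_trans (max_card _)) ?card_ord.
Qed.

End ErrorBounds.

Theorem lemma5 (R : realType) (m n k : nat) (A : 'M[R]_(m, n))
  (dk d2k : R) (x : 'cV[R]_n) (eta : 'cV[R]_m) (S : {set 'I_n})
  (u w what : 'cV[R]_n) (T T2 : {set 'I_n}) :
  is_RIC A k dk -> is_RIC A (2 * k) d2k -> d2k < 1 ->
  is_Lk k x S ->
  is_argmin A (A *m x + eta) u k w ->
  is_Lk k (hadam u w) T ->
  is_Lk k (u - restr x S) T2 ->
  (forall i, what i 0 = 0 \/ what i 0 = 1) -> sparse k what ->
  S \subset supp what ->
  let eta' := A *m restr x (~: S) + eta in
  let S' := supp (Hk (hadam u w) T) in
  let e := restr x S - hadam u w in
  norm2 (restr e (S :|: S'))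
    <= Num.sqrt ((1 + dk) / (1 - d2k)) * norm2 (hadam (restr x S - u) what)
       + 2 / Num.sqrt (1 - d2k) * norm2 eta'
       + 1 / Num.sqrt (1 - d2k) * norm2 (A *m restr e (~: (S :|: S')))
  /\
  norm2 (A *m restr e (~: (S :|: S')))
    <= 2 * Num.sqrt (1 + dk) * norm2 (Hk (u - restr x S) T2).
Proof.
move=> [ripk _] [rip2k _] d2k_lt1 [cardS _] w_min [cardT _] topT2
  what_binary what_sparse S_what eta' S' e.
have [w_feas _] := w_min.
have cardSk : #|S| = k by rewrite cardS; apply/minn_idPl; apply: feasible_card_le w_feas.
have what_ind : forall i, what i 0 = (i \in S)%:R.
  by apply: binary_indicator; rewrite ?cardSk.
have cardO : (#|S :|: S'| <= 2 * k)%N.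
  have cardS' : (#|S'| <= k)%N.
    by rewrite (leq_trans (subset_leq_card (supp_restr _ _))) // cardT geq_minl.
  by rewrite (leq_trans (leq_card_setU _ _)) // cardSk; lia.
split.
- have what_feas : feasible k what by rewrite -cardSk; apply: indicator_feasible.
  have := on_support_bound (S := S) ripk rip2k cardO w_min what_feas.
  rewrite indicator_hadam // => /(_ (sparse_sub (supp_hadam _ _) what_sparse)) bound.
  rewrite sqrtrM ?sqrtrV ?subr_ge0 ?(ltW d2k_lt1) //; last by case: ripk => dk0 _; lra.
  by apply: divide_bound bound; rewrite sqrtr_gt0 subr_gt0.
- apply: le_trans (off_support_bound ripk topT2 w_feas (subsetUl _ _)) _.
  apply: (ler_wpM2r (norm2_ge0 _)).
  by have := sqrtr_ge0 (1 + dk); lra.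
Qed.
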